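(* Let $a_1,\dots,a_n$ and $b_1,\dots,b_n$ be complex numbers with all $a_i\ne0$, and let $a=\sum_{i=1}^n a_i$, $b=\sum_{i=1}^n b_i$. Suppose that for some reals $1>\tau>\epsilon>0$ we have $$\left|\frac{b_i}{a_i}-1\right|\le\epsilon\ \ (i=1,\dots,n)\qquad\text{and}\qquad |a|\ge\tau\sum_{i=1}^n|a_i|.$$ Then $a\ne0$, $b\ne0$, and the angle between $a$ and $b$ (as vectors in $\mathbb{R}^2\cong\mathbb{C}$) does not exceed $\arcsin\frac{\epsilon}{\tau}$. *)

From Stdlib Require Import Reals.
From Coquelicot Require Import Coquelicot.
Open Scope R_scope.

(* The (unoriented) angle in [0, pi] between two nonzero complex numbers
   z and w, viewed as vectors of R^2: cos(angle) = <z,w>/(|z||w|),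
   where the Euclidean inner product is <z,w> = Re (z * conj w). *)
Definition vec_angle (z w : C) : R :=
  acos (Re (z * Cconj w) / (Cmod z * Cmod w)).

(* The perturbation b - a is small compared with a: summing |b_i - a_i| <= eps |a_i|
   and using |a| >= tau sum |a_i| gives |b - a| <= r |a| with r = eps / tau < 1.
   Expanding |b - a|^2 <= r^2 |a|^2 yields 2 <a,b> >= |b|^2 + (1 - r^2) |a|^2, and by
   AM-GM the right-hand side is at least 2 sqrt(1 - r^2) |a| |b|; hence the cosine of the
   angle is at least sqrt(1 - r^2) = cos (asin r). *)

From Stdlib Require Import Reals Lra Psatz.
From Coquelicot Require Import Coquelicot.
Open Scope R_scope.

Lemma sum_n_pos (f : nat -> R) (m : nat) :
  (forall i, 0 <= f i) -> 0 < f 0%nat -> 0 < sum_n f m.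
Proof.
  intros Hf Hf0. induction m as [|m IH].
  - now rewrite sum_O.
  - rewrite sum_Sn. unfold plus; simpl. specialize (Hf (S m)). lra.
Qed.

Lemma Cmod_sub_le_of_ratio (a b : C) (eps : R) :
  a <> 0 -> Cmod (b / a - 1) <= eps -> Cmod (b - a) <= eps * Cmod a.
Proof.
  intros Ha Hr.
  replace (b - a)%C with ((b / a - 1) * a)%C by (field; exact Ha).
  rewrite Cmod_mult. apply Rmult_le_compat_r; [apply Cmod_ge_0 | exact Hr].
Qed.

Lemma Cmod_sum_n_sub_le (a b : nat -> C) (eps : R) (m : nat) :
  (forall i, (i <= m)%nat -> Cmod (b i - a i) <= eps * Cmod (a i)) ->
  Cmod (sum_n b m - sum_n a m) <= eps * sum_n (fun i => Cmod (a i)) m.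
Proof.
  intros H. induction m as [|m IH].
  - rewrite !sum_O. apply H. lia.
  - rewrite !sum_Sn. unfold plus; simpl.
    replace (sum_n b m + b (S m) - (sum_n a m + a (S m)))%C
      with ((sum_n b m - sum_n a m) + (b (S m) - a (S m)))%C by ring.
    eapply Rle_trans; [apply Cmod_triangle |].
    rewrite Rmult_plus_distr_l. apply Rplus_le_compat.
    + apply IH. intros i Hi. apply H. lia.
    + apply H. lia.
Qed.

Lemma Re_mul_Cconj_le (z w : C) : Re (z * Cconj w) <= Cmod z * Cmod w.
Proof.
  rewrite <- (Cmod_conj w), <- Cmod_mult.
  eapply Rle_trans; [apply Rle_abs | apply re_le_Cmod].
Qed.

Lemma Cmod_sub_sqr (z w : C) :
  Cmod (w - z) ^ 2 = Cmod w ^ 2 + Cmod z ^ 2 - 2 * Re (z * Cconj w).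
Proof.
  rewrite !Cmod2_alt. destruct z as [x y], w as [u v]. simpl. ring.
Qed.

Lemma Re_mul_Cconj_ge_of_near (z w : C) (r : R) :
  0 <= r < 1 -> z <> 0 -> Cmod (w - z) <= r * Cmod z ->
  w <> 0 /\ sqrt (1 - r²) * (Cmod z * Cmod w) <= Re (z * Cconj w).
Proof.
  intros Hr Hz Hd.
  apply Cmod_gt_0 in Hz.
  assert (Hw : 0 < Cmod w).
  { assert (Htri := Cmod_triangle (- (w - z)) w).
    rewrite Cmod_opp in Htri.
    replace (- (w - z) + w)%C with z in Htri by ring. nra. }
  split; [apply Cmod_gt_0; exact Hw |].
  set (k := 1 - r²).
  assert (Hk : 0 < k) by (unfold k, Rsqr; nra).
  assert (Hsk : sqrt k * sqrt k = k) by (apply sqrt_sqrt; lra).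
  assert (Hexpand : Cmod w ^ 2 + k * Cmod z ^ 2 <= 2 * Re (z * Cconj w)).
  { assert (Hd2 : Cmod (w - z) ^ 2 <= (r * Cmod z) ^ 2)
      by (apply pow_incr; split; [apply Cmod_ge_0 | exact Hd]).
    rewrite Cmod_sub_sqr in Hd2. unfold k, Rsqr. nra. }
  (* AM-GM: (|w| - sqrt k |z|)^2 >= 0. *)
  assert (Hsq := pow2_ge_0 (Cmod w - sqrt k * Cmod z)).
  nra.
Qed.

Lemma acos_le_asin (c r : R) :
  0 <= r < 1 -> sqrt (1 - r²) <= c <= 1 -> acos c <= asin r.
Proof.
  intros Hr Hc.
  assert (Hs := sqrt_pos (1 - r²)).
  assert (Hasin := asin_bound r). assert (Hacos := acos_bound c).
  assert (Hasin0 : 0 <= asin r).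
  { destruct (Rle_or_lt 0 (asin r)) as [h | h]; [exact h |].
    assert (Hneg : sin (asin r) < 0) by (apply sin_lt_0_var; lra).
    rewrite sin_asin in Hneg by lra. lra. }
  destruct (Rle_or_lt (acos c) (asin r)) as [h | h]; [exact h | exfalso].
  assert (Hcos : cos (acos c) < cos (asin r)) by (apply cos_decreasing_1; lra).
  rewrite cos_acos, cos_asin in Hcos by lra. lra.
Qed.

Lemma vec_angle_le_asin (z w : C) (r : R) :
  0 <= r < 1 -> z <> 0 -> Cmod (w - z) <= r * Cmod z ->
  w <> 0 /\ vec_angle z w <= asin r.
Proof.
  intros Hr Hz Hd.
  destruct (Re_mul_Cconj_ge_of_near z w r Hr Hz Hd) as [Hw Hcos].
  split; [exact Hw |].
  assert (Hzw : 0 < Cmod z * Cmod w)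
    by (apply Rmult_lt_0_compat; now apply Cmod_gt_0).
  unfold vec_angle. apply acos_le_asin; [exact Hr | split].
  - apply Rle_div_r; assumption.
  - apply Rle_div_l; [exact Hzw |]. rewrite Rmult_1_l. apply Re_mul_Cconj_le.
Qed.

(* The n >= 1 numbers a_1..a_n are indexed as a 0, ..., a m (m = n - 1). *)
Theorem lemma4p2 (m : nat) (a b : nat -> C) (tau eps : R)
  (Ha : forall i, (i <= m)%nat -> a i <> RtoC 0)
  (Heps : 0 < eps) (Htaueps : eps < tau) (Htau : tau < 1)
  (Hratio : forall i, (i <= m)%nat -> Cmod (b i / a i - 1) <= eps)
  (Hsum : Cmod (sum_n a m) >= tau * sum_n (fun i => Cmod (a i)) m) :
  sum_n a m <> RtoC 0 /\ sum_n b m <> RtoC 0 /\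
  vec_angle (sum_n a m) (sum_n b m) <= asin (eps / tau).
Proof.
  set (S := sum_n (fun i => Cmod (a i)) m) in *.
  assert (HS : 0 < S).
  { apply sum_n_pos; [intro; apply Cmod_ge_0 |].
    apply Cmod_gt_0, Ha. lia. }
  assert (HA : sum_n a m <> RtoC 0) by (apply Cmod_gt_0; nra).
  assert (Hdiff : Cmod (sum_n b m - sum_n a m) <= eps * S).
  { apply Cmod_sum_n_sub_le. intros i Hi.
    apply Cmod_sub_le_of_ratio; auto. }
  assert (Hr : 0 <= eps / tau < 1).
  { split; [apply Rlt_le, Rdiv_lt_0_compat; lra |].
    apply Rlt_div_l; lra. }
  assert (Hnear : Cmod (sum_n b m - sum_n a m) <= eps / tau * Cmod (sum_n a m)).
  { apply Rle_trans with (eps * S); [exact Hdiff |].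
    apply Rmult_le_reg_l with tau; [lra |].
    replace (tau * (eps / tau * Cmod (sum_n a m))) with (eps * Cmod (sum_n a m))
      by (field; lra).
    nra. }
  destruct (vec_angle_le_asin _ _ _ Hr HA Hnear) as [HB Hangle].
  auto.
Qed.
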